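(* Let $\mathcal{K}$ be a compact second-countable Hausdorff space, let $\mathcal{C}$ be the set of continuous functions $\mathcal{K}\to\mathbb{R}$, and let $\mathcal{F}\subseteq\mathcal{C}$ be a generating system. For every $\mathcal{F}$-moment function sequence $w=(w_f:f\in\mathcal{F})$ there is a $\mathcal{K}$-graphon $W$ whose $\mathcal{F}$-moment representation is $w$, i.e. $\int_{\mathcal{K}}f\,dW(x,y)=w_f(x,y)$ for all $f\in\mathcal{F}$ and $x,y\in[0,1]$.
   Context: A generating system is a subset of $\mathcal{C}$ whose linear span is dense in $\mathcal{C}$ in supremum norm. An $\mathcal{F}$-moment sequence is a family $(a_f:f\in\mathcal{F})$ of reals of the form $a_f=\int_{\mathcal{K}}f\,d\mu$ for some Borel probability measure $\mu$ on $\mathcal{K}$. An $\mathcal{F}$-moment function sequence is a family $(w_f:f\in\mathcal{F})$ of bounded symmetric measurable functions $w_f:[0,1]^2\to\mathbb{R}$ such that $(w_f(x,y):f\in\mathcal{F})$ is an $\mathcal{F}$-moment sequence for all $x,y\in[0,1]$. Let $\mathcal{P}(\mathcal{K})$ be the space of Borel probability measures on $\mathcal{K}$ with the weak topology. A $\mathcal{K}$-graphon is a Borel measurable map $W:[0,1]^2\to\mathcal{P}(\mathcal{K})$ with $W(x,y)=W(y,x)$; its $\mathcal{F}$-moment representation is $(W_f:f\in\mathcal{F})$ with $W_f(x,y)=\int_{\mathcal{K}}f\,dW(x,y)$. *)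

From HB Require Import structures.
From mathcomp Require Import all_boot all_order all_algebra.
From mathcomp Require Import all_classical all_reals all_analysis.
Set Implicit Arguments. Unset Strict Implicit. Unset Printing Implicit Defensive.
Import Order.TTheory GRing.Theory Num.Theory.
Import numFieldNormedType.Exports.
Local Open Scope classical_set_scope.
Local Open Scope ring_scope.

Notation borel K := (g_sigma_algebraType (@open K)).

Definition PK (R : realType) (K : ptopologicalType) := probability (borel K) R.

Definition integ (R : realType) (K : ptopologicalType) (mu : PK R K)
  (f : K -> R) : \bar R := (\int[mu]_x (f x)%:E)%E.

Definition lin_span (R : realType) (K : Type) (F : set (K -> R)) : set (K -> R) :=
  [set h | exists (n : nat) (c : 'I_n -> R) (g : 'I_n -> K -> R),
     (forall i, F (g i)) /\ h = (fun x => \sum_(i < n) c i * g i x)].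

Definition generating_system (R : realType) (K : ptopologicalType)
  (F : set (K -> R)) :=
  (forall f, F f -> continuous f) /\
  forall g : K -> R, continuous g -> forall eps : R, 0 < eps ->
    exists2 h, lin_span F h & forall x, `|g x - h x| <= eps.

Definition moment_sequence (R : realType) (K : ptopologicalType)
  (F : set (K -> R)) (a : (K -> R) -> R) :=
  exists mu : PK R K, forall f, F f -> integ mu f = (a f)%:E.

Definition I01 (R : realType) : set R := [set x : R | 0 <= x <= 1].
Arguments I01 R : clear implicits.
Definition sq01 (R : realType) : set (R * R)%type := I01 R `*` I01 R.
Arguments sq01 R : clear implicits.

(* (w_f : f in F) is an F-moment function sequence; each w_f : [0,1]^2 -> R
   is represented as a function R -> R -> R of which only the values on
   [0,1]^2 matter. *)
Definition moment_function_sequence (R : realType) (K : ptopologicalType)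
  (F : set (K -> R)) (w : (K -> R) -> R -> R -> R) :=
  (forall f, F f ->
     (exists M : R, forall x y, I01 R x -> I01 R y -> `|w f x y| <= M) /\
     (forall x y, I01 R x -> I01 R y -> w f x y = w f y x) /\
     measurable_fun (sq01 R) (fun p : (R * R)%type => w f p.1 p.2)) /\
  forall x y, I01 R x -> I01 R y -> moment_sequence F (fun f => w f x y).

(* Open sets of P(K) for the weak topology, i.e. the coarsest topology making
   all maps mu |-> int g dmu (g continuous) continuous: U is open iff every
   mu in U has a basic neighbourhood
   {nu | |int g_i dnu - int g_i dmu| < eps for all i < n} contained in U. *)
Definition weak_open (R : realType) (K : ptopologicalType) (U : set (PK R K)) :=
  forall mu, U mu -> exists (n : nat) (g : 'I_n -> K -> R) (eps : R),
    (forall i, continuous (g i)) /\ 0 < eps /\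
    [set nu : PK R K | forall i,
       `|fine (integ nu (g i)) - fine (integ mu (g i))| < eps] `<=` U.

(* A K-graphon: a Borel measurable (for the Borel sigma-algebra of the weak
   topology, i.e. preimages of weakly open sets are Borel) symmetric map
   [0,1]^2 -> P(K). *)
Definition graphon (R : realType) (K : ptopologicalType)
  (W : R -> R -> PK R K) :=
  (forall x y, I01 R x -> I01 R y -> W x y = W y x) /\
  forall U : set (PK R K), weak_open U ->
    measurable (sq01 R `&` (fun p : (R * R)%type => W p.1 p.2) @^-1` U).

(* For each (x, y) in [0,1]^2 choose a probability measure with moments
   w_f(x, y); choosing it at (min, max) makes W symmetric, and the content is
   the measurability of W.  Since K is compact and second countable, C(K) has
   a countable uniformly dense family (interpolations of rational values by
   Urysohn bumps over a countable base), which can be pushed into span F.  For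
   h in span F, (x, y) |-> int h dW(x, y) is a finite combination of the w_f,
   hence measurable, and every weakly open set is a countable union of sets
   {nu | |int h_i dnu| < 1/(k+1) for finitely many i}, whose preimages are
   thus measurable. *)

From HB Require Import structures.
From mathcomp Require Import all_boot all_order all_algebra.
From mathcomp Require Import all_classical all_reals all_analysis.
From mathcomp Require Import measurable_realfun ring lra.
Set Implicit Arguments. Unset Strict Implicit. Unset Printing Implicit Defensive.
Import Order.TTheory GRing.Theory Num.Theory.
Import numFieldNormedType.Exports.
Local Open Scope classical_set_scope.
Local Open Scope ring_scope.

Section mean.
Context (R : realType) (K : ptopologicalType).

Definition bounded_measurable (g : K -> R) :=
  @measurable_fun _ _ (borel K) R setT g /\ exists M : R, forall x, `|g x| <= M.

Lemma continuous_measurable (g : K -> R) : continuous g ->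
  @measurable_fun _ _ (borel K) R setT g.
Proof.
move=> cg; apply: (measurability _ (RGenOpens.measurableE R)).
move=> _ [_ [a [b ->]] <-]; rewrite setTI; apply: sub_gen_smallest.
by apply: (proj1 (continuousP g) cg); exact: interval_open.
Qed.

Lemma continuous_bounded_measurable (g : K -> R) :
  compact [set: K] -> continuous g -> bounded_measurable g.
Proof.
move=> Kc cg; split; first exact: continuous_measurable.
have /compact_bounded[M [_ HM]] : compact (g @` setT).
  by apply: continuous_compact => //; exact: continuous_subspaceT.
by exists (M + 1) => x; apply: (HM (M + 1)); [rewrite ltrDl | exists x].
Qed.

Lemma bounded_measurable_cst (c : R) : bounded_measurable (fun _ => c).
Proof. by split; [exact: measurable_cst | exists `|c|]. Qed.

Lemma bounded_measurableD f g : bounded_measurable f -> bounded_measurable g ->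
  bounded_measurable (fun x => f x + g x).
Proof.
move=> [mf [M HM]] [mg [N HN]]; split; first exact: measurable_funD.
by exists (M + N) => x; rewrite (le_trans (ler_normD _ _))// lerD.
Qed.

Lemma bounded_measurableZ c f : bounded_measurable f ->
  bounded_measurable (fun x => c * f x).
Proof.
move=> [mf [M HM]]; split; first exact: measurable_funM.
by exists (`|c| * M) => x; rewrite normrM ler_wpM2l.
Qed.

Lemma bounded_measurableB f g : bounded_measurable f -> bounded_measurable g ->
  bounded_measurable (fun x => f x - g x).
Proof.
move=> bf bg; rewrite (_ : (fun x => _) = (fun x => f x + (-1) * g x)).
  exact: bounded_measurableD bf (bounded_measurableZ (-1) bg).
by apply: funext => x; rewrite mulN1r.
Qed.

Lemma bounded_measurable_sum (I : Type) (r : seq I) (f : I -> K -> R) :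
  (forall i, bounded_measurable (f i)) ->
  bounded_measurable (fun x => \sum_(i <- r) f i x).
Proof.
move=> bf; elim: r => [|i r IH].
  by under eq_fun do rewrite big_nil; exact: bounded_measurable_cst.
by under eq_fun do rewrite big_cons; exact: bounded_measurableD.
Qed.

Variable mu : PK R K.

Lemma bounded_measurable_integrable g :
  bounded_measurable g -> mu.-integrable setT (EFin \o g).
Proof.
move=> [mg [M HM]]; apply: measurable_bounded_integrable => //.
  by have : (mu setT < +oo)%E by rewrite probability_setT ltry.
exists M; split; first exact: num_real.
by move=> y My x _; exact: le_trans (HM x) (ltW My).
Qed.

Definition mean (g : K -> R) : R := fine (integ mu g).

Lemma integ_mean g : bounded_measurable g -> integ mu g = (mean g)%:E.
Proof.
move=> bg; rewrite /mean fineK//; apply: integrable_fin_num => //.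
exact: bounded_measurable_integrable.
Qed.

Lemma meanD f g : bounded_measurable f -> bounded_measurable g ->
  mean (fun x => f x + g x) = mean f + mean g.
Proof.
move=> bf bg; apply: EFin_inj.
rewrite -integ_mean; last exact: bounded_measurableD.
rewrite EFinD -!integ_mean // /integ -integralD_EFin //;
  exact: bounded_measurable_integrable.
Qed.

Lemma meanZ c g : bounded_measurable g -> mean (fun x => c * g x) = c * mean g.
Proof.
move=> bg; apply: EFin_inj; rewrite -integ_mean; last exact: bounded_measurableZ.
rewrite EFinM -integ_mean // /integ -integralZl //.
exact: bounded_measurable_integrable.
Qed.

Lemma mean_cst c : mean (fun _ => c) = c.
Proof.
apply: EFin_inj; rewrite -integ_mean; last exact: bounded_measurable_cst.
rewrite /integ integral_cst// -[RHS]mule1; congr (_ * _)%E.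
exact: probability_setT.
Qed.

Lemma meanB f g : bounded_measurable f -> bounded_measurable g ->
  mean (fun x => f x - g x) = mean f - mean g.
Proof.
move=> bf bg; rewrite (_ : (fun x => _) = (fun x => f x + (-1) * g x)).
  by rewrite meanD ?meanZ ?mulN1r //; exact: bounded_measurableZ.
by apply: funext => x; rewrite mulN1r.
Qed.

Lemma mean_sum (I : Type) (r : seq I) (f : I -> K -> R) :
  (forall i, bounded_measurable (f i)) ->
  mean (fun x => \sum_(i <- r) f i x) = \sum_(i <- r) mean (f i).
Proof.
move=> bf; elim: r => [|i r IH].
  by under eq_fun do rewrite big_nil; rewrite mean_cst big_nil.
under eq_fun do rewrite big_cons.
by rewrite meanD ?IH ?big_cons //; exact: bounded_measurable_sum.
Qed.

Lemma norm_mean_le g e : bounded_measurable g -> (forall x, `|g x| <= e) ->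
  `|mean g| <= e.
Proof.
move=> bg ge; have mg := bg.1.
have e0 : 0 <= e by exact: le_trans (ge point).
rewrite -lee_fin -abse_EFin -integ_mean //.
apply: le_trans; first by apply: le_abse_integral => //; exact/measurable_EFinP.
apply: le_trans.
  apply: (integral_le_bound e%:E) => //; first exact/measurable_EFinP.
  by apply: aeW => x _; rewrite /= lee_fin.
rewrite -[leRHS]mule1; apply: lee_wpmul2l; first by rewrite lee_fin.
exact: probability_le1.
Qed.

End mean.

Section interpolation.
Context (R : realType) (T : Type) (X : eqType).
Variables (ph : X -> T -> R) (q : X -> R).

Definition interp (L : seq X) : T -> R :=
  foldr (fun t f x => q t * ph t x + (1 - ph t x) * f x) (fun _ => 0) L.

(* [interp L x] is a convex combination of the values [q t] with [ph t x != 0]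
   as soon as some [ph t x] equals [1]. *)
Lemma interp_approx (g : T -> R) (eps : R) (x : T) (L : seq X) :
  (forall t, t \in L -> 0 <= ph t x <= 1 /\ (ph t x != 0 -> `|g x - q t| <= eps)) ->
  (exists2 t, t \in L & ph t x = 1) ->
  `|g x - interp L x| <= eps.
Proof.
elim: L => [|t L IH] L_ok [t0]; first by rewrite in_nil.
have [/andP[a0 a1] t_close] := L_ok t (mem_head _ _).
rewrite inE => t0L ph_t0 /=.
set a := ph t x; set f := interp L x.
have -> : g x - (q t * a + (1 - a) * f) = a * (g x - q t) + (1 - a) * (g x - f).
  by ring.
have [a_eq1|a_neq1] := eqVneq a 1.
  by rewrite a_eq1 subrr mul0r addr0 mul1r; apply: t_close; rewrite -/a a_eq1 oner_neq0.
have left_le : `|a * (g x - q t)| <= a * eps.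
  rewrite normrM ger0_norm //; have [->|a_neq0] := eqVneq a 0; first by rewrite !mul0r.
  by rewrite ler_wpM2l // t_close.
have right_le : `|(1 - a) * (g x - f)| <= (1 - a) * eps.
  rewrite normrM (ger0_norm (x := 1 - a)) ?subr_ge0 //.
  apply: ler_wpM2l; first by rewrite subr_ge0.
  apply: IH; first by move=> t' t'L; apply: L_ok; rewrite inE t'L orbT.
  case/orP: t0L => [/eqP t0_eq|t0L]; last by exists t0.
  by move: a_neq1; rewrite /a -t0_eq ph_t0 eqxx.
apply: le_trans (ler_normD _ _) _.
have -> : eps = a * eps + (1 - a) * eps by ring.
exact: lerD.
Qed.

End interpolation.

Lemma interp_continuous (R : realType) (T : topologicalType) (X : eqType)
  (ph : X -> T -> R) (q : X -> R) (L : seq X) :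
  (forall t, continuous (ph t)) -> continuous (interp ph q L).
Proof.
move=> cph; elim: L => [|t L IH] /=; first exact: cst_continuous.
move=> x; have cq : {for x, continuous (fun=> q t)} by exact: cvg_cst.
have c1 : {for x, continuous (fun=> 1 : R)} by exact: cvg_cst.
have c1ph := continuousB c1 (cph t x).
exact: (continuousD (continuousM cq (cph t x)) (continuousM c1ph (IH x))).
Qed.

Section bump.
Context (R : realType) (T : topologicalType).

Definition bump (A B : set T) : T -> R := fun x => 1 - Urysohn A (~` B) x.

Lemma bump_continuous A B : continuous (bump A B).
Proof.
move=> x; have c1 : {for x, continuous (fun=> 1 : R)} by exact: cvg_cst.
exact: (continuousB c1 (@Urysohn_continuous T R A (~` B) x)).
Qed.

Lemma bump_range A B x : 0 <= bump A B x <= 1.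
Proof.
have /andP[u0 u1] := @Urysohn_range T R A (~` B) _ (imageT _ x).
rewrite !bnd_simp in u0 u1.
by rewrite /bump subr_ge0 u1 lerBlDr lerDl.
Qed.

Hypothesis normalT : normal_space T.
Variables (A B : set T).
Hypotheses (clA : closed A) (opB : open B) (AB : A `<=` B).

Let separator : uniform_separator A (~` B).
Proof.
apply: normal_uniform_separator => //; first exact: open_closedC.
by apply/disjoints_subset; rewrite setCK.
Qed.

Lemma bump1 x : A x -> bump A B x = 1.
Proof.
move=> Ax; rewrite /bump (_ : Urysohn _ _ x = 0) ?subr0//.
by apply: (Urysohn_sub0 separator); exists x.
Qed.

Lemma bump_neq0 x : bump A B x != 0 -> B x.
Proof.
move=> bx; apply: contrapT => nBx; move: bx.
rewrite /bump (_ : Urysohn _ _ x = 1) ?subrr ?eqxx//.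
by apply: (Urysohn_sub1 separator); exists x.
Qed.

End bump.

Lemma countable_open_basis (T : ptopologicalType) : @second_countable T ->
  exists e : nat -> set T, (forall n, open (e n)) /\
    forall x A, nbhs x A -> exists2 n, e n x & e n `<=` A.
Proof.
move=> [B /pcard_surjP[g gB] [Bo Bx]].
exists (fun n => if `[< B (g n) >] then g n else set0); split.
  by move=> n; case: asboolP => [/Bo|_] //; exact: open0.
move=> x A /Bx[U [BU Ux] UA]; have [n _ gnU] := gB U BU.
by exists n; rewrite gnU asboolT.
Qed.

Definition uniformly_dense (R : realType) (T : topologicalType) (I : Type)
  (D : I -> T -> R) :=
  forall g : T -> R, continuous g -> forall eps, 0 < eps ->
    exists i, forall x, `|g x - D i x| <= eps.

Section separable.
Context (R : realType) (K : ptopologicalType).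
Hypotheses (Kc : compact [set: K]) (Kh : hausdorff_space K).
Variable e : nat -> set K.
Hypothesis e_open : forall n, open (e n).
Hypothesis e_basis : forall x A, nbhs x A -> exists2 n, e n x & e n `<=` A.

Lemma local_rational_approx (g : K -> R) (eps : R) (x : K) :
  continuous g -> 0 < eps ->
  exists t : nat * nat * rat, [/\ e t.1.1 x, closure (e t.1.1) `<=` e t.1.2,
    (forall y, e t.1.2 y -> `|g y - g x| < eps) & `|g x - ratr t.2| < eps].
Proof.
move=> cg eps0; pose O := g @^-1` ball (g x) eps.
have nO : nbhs x O.
  apply: open_nbhs_nbhs; split; last exact: ballxx.
  by apply: (proj1 (continuousP g) cg); exact: ball_open.
have [b bx bO] := e_basis nO.
have nb : nbhs x (e b) by apply: open_nbhs_nbhs.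
have [V Vx Vb] := compact_regular Kh Kc (@filterT _ _ _) nb.
have [a ax aV] := e_basis Vx.
have /rat_in_itvoo[q] : g x - eps < g x + eps by rewrite ltrBlDr -addrA ltrDl addr_gt0.
rewrite in_itv /= => /andP[q1 q2].
exists ((a, b), q); split => //=.
- by move=> y /(closureS aV) /Vb.
- by move=> y /bO; rewrite /O /= /ball /= distrC.
- by rewrite ltr_norml; apply/andP; split; lra.
Qed.

Definition basis_interp : seq (nat * nat * rat) -> K -> R :=
  interp (fun t => @bump R K (closure (e t.1.1)) (e t.1.2)) (fun t => ratr t.2).

Lemma basis_interp_continuous L : continuous (basis_interp L).
Proof. by apply: interp_continuous => t; exact: bump_continuous. Qed.

Lemma basis_interp_dense : uniformly_dense basis_interp.
Proof.
move=> g cg eps eps0; have eps20 : 0 < eps / 2 by rewrite divr_gt0.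
have [T HT] := choice (fun x => local_rational_approx x cg eps20).
have nK := compact_normal Kh Kc.
have : finite_subset_cover [set: K] (fun x => e (T x).1.1) [set: K].
  move: Kc; rewrite compact_cover; apply; first by move=> x _; exact: e_open.
  by move=> x _; exists x => //; have [] := HT x.
move=> [X _ XK]; exists [seq T x | x <- finmap.enum_fset X] => y.
apply: interp_approx => [t /mapP[z _ ->]|].
  have [_ clz gz qz] := HT z; split; first exact: bump_range.
  move=> /(bump_neq0 nK (@closed_closure _ _) (e_open _) clz) /gz gyz.
  have -> : g y - ratr (T z).2 = (g y - g z) + (g z - ratr (T z).2) by ring.
  apply: le_trans (ler_normD _ _) _.
  by rewrite (splitr eps); apply: lerD; apply: ltW.
have [z zX yz] := XK y I; exists (T z); first by apply/mapP; exists z.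
have [_ clz _ _] := HT z.
apply: (bump1 R nK (@closed_closure _ _) (e_open _) clz); exact: subset_closure.
Qed.

End separable.

Lemma continuous_separable (R : realType) (K : ptopologicalType) :
  compact [set: K] -> hausdorff_space K -> @second_countable K ->
  exists D : seq (nat * nat * rat) -> K -> R,
    (forall L, continuous (D L)) /\ uniformly_dense D.
Proof.
move=> Kc Kh /countable_open_basis[e [e_open e_basis]].
exists (basis_interp R e); split; first exact: basis_interp_continuous.
exact: basis_interp_dense.
Qed.

Lemma exists_natSinv_lt (R : archiRealFieldType) (e : R) : 0 < e ->
  exists k : nat, k.+1%:R^-1 < e.
Proof.
move=> e0; exists (Num.truncn e^-1).
by rewrite -[ltRHS]invrK ltf_pV2 ?posrE ?invr_gt0 // truncnS_gt.
Qed.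

Section lin_span.
Context (R : realType) (K : ptopologicalType) (F : set (K -> R)).
Hypothesis Fc : forall f, F f -> continuous f.

Lemma lin_span_continuous h : lin_span F h -> continuous h.
Proof.
move=> [n [c [g [Fg ->]]]].
suff sum_continuous r : continuous (fun x => \sum_(i <- r) c i * g i x).
  exact: sum_continuous.
elim: r => [|i r IH].
  by under eq_fun do rewrite big_nil; exact: cst_continuous.
under eq_fun do rewrite big_cons.
move=> x; have ci : {for x, continuous (fun=> c i)} by exact: cvg_cst.
apply: (continuousD (f := fun x => c i * g i x)) (IH x).
by apply: continuousM => //; exact: Fc.
Qed.

Lemma dense_lin_span (I : Type) (D : I -> K -> R) :
  generating_system F -> (forall i, continuous (D i)) -> uniformly_dense D ->
  exists D' : I * nat -> K -> R,
    (forall j, lin_span F (D' j)) /\ uniformly_dense D'.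
Proof.
move=> [_ Fdense] Dc Dd.
have approx (j : I * nat) : exists h, lin_span F h /\
    forall x, `|D j.1 x - h x| <= j.2.+1%:R^-1.
  have k0 : 0 < j.2.+1%:R^-1 :> R by rewrite invr_gt0.
  by have [h Fh Dh] := Fdense _ (Dc j.1) _ k0; exists h.
have [D' D'approx] := choice approx.
exists D'; split => [j|g cg eps eps0]; first exact: (D'approx j).1.
have eps20 : 0 < eps / 2 by rewrite divr_gt0.
have [i Di] := Dd g cg _ eps20.
have [k kinv] := exists_natSinv_lt eps20.
exists (i, k) => x.
have -> : g x - D' (i, k) x = (g x - D i x) + (D i x - D' (i, k) x) by ring.
apply: le_trans (ler_normD _ _) _; rewrite (splitr eps); apply: lerD => //.
exact: le_trans ((D'approx (i, k)).2 x) (ltW kinv).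
Qed.

Hypothesis Kc : compact [set: K].

Lemma mean_lin_span (mu : PK R K) n (c : 'I_n -> R) (g : 'I_n -> K -> R) :
  (forall i, F (g i)) ->
  mean mu (fun x => \sum_(i < n) c i * g i x) = \sum_(i < n) c i * mean mu (g i).
Proof.
move=> Fg; have bg i : bounded_measurable (g i).
  exact: continuous_bounded_measurable (Fc (Fg i)).
rewrite mean_sum => [|i]; last exact: bounded_measurableZ.
by apply: eq_bigr => i _; rewrite meanZ.
Qed.

Lemma measurable_mean_lin_span d (T : measurableType d) (S : set T)
  (W : T -> PK R K) (h : K -> R) : lin_span F h ->
  (forall f, F f -> measurable_fun S (fun p => mean (W p) f)) ->
  measurable_fun S (fun p => mean (W p) h).
Proof.
move=> [n [c [g [Fg ->]]]] mW.
under eq_fun do rewrite mean_lin_span //.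
apply: measurable_sum => i; apply: measurable_funM; first exact: measurable_cst.
exact: mW.
Qed.

End lin_span.

Lemma measurableI_forall_mem d (T : measurableType d) (J : eqType)
  (S : set T) (P : J -> set T) (l : seq J) :
  measurable S -> (forall j, measurable (S `&` P j)) ->
  measurable (S `&` [set p | forall j, j \in l -> P j p]).
Proof.
move=> mS mP; elim: l => [|j l IH].
  by rewrite (_ : [set p | _] = setT) ?setIT //; apply/seteqP; split.
rewrite (_ : _ `&` _ = (S `&` P j) `&` (S `&` [set p | forall j, j \in l -> P j p])).
  exact: measurableI.
apply/seteqP; split => [p [Sp Pp]|p [[Sp Pjp] [_ Plp]]].
  split; split => //; first by apply: Pp; rewrite mem_head.
  by move=> i il; apply: Pp; rewrite inE il orbT.
by split => // i; rewrite inE => /orP[/eqP->|/Plp].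
Qed.

Section weak_open_preimage.
Context (R : realType) (K : ptopologicalType).
Hypothesis Kc : compact [set: K].
Variables (I : countType) (D : I -> K -> R).
Hypotheses (Dc : forall i, continuous (D i)) (Dd : uniformly_dense D).

Definition small_means (t : seq I * nat) : set (PK R K) :=
  [set nu | forall i, i \in t.1 -> `|mean nu (D i)| < t.2.+1%:R^-1].

(* Pick [D (J i)] uniformly close to the centred [g i - mean mu (g i)]: then
   [mu] has small means and every [nu] with small means is weakly close to [mu]. *)
Lemma weak_open_small_means (U : set (PK R K)) (mu : PK R K) :
  weak_open U -> U mu -> exists t, small_means t mu /\ small_means t `<=` U.
Proof.
move=> HU /HU[n [g [eps [gc [eps0 epsU]]]]].
have [k keps] := exists_natSinv_lt (divr_gt0 eps0 (ltr0Sn R 1)).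
set eta : R := k.+1%:R^-1 in keps *.
have eta0 : 0 < eta by rewrite invr_gt0.
pose a i := mean mu (g i).
have approx i : exists j, forall x, `|g i x - a i - D j x| <= eta / 2.
  apply: Dd; last by rewrite divr_gt0.
  move=> x; apply: (continuousB (f := g i) (g := fun=> a i)) (gc i x) _.
  exact: cvg_cst.
have [J gJ] := choice approx.
have bg i : bounded_measurable (g i) := continuous_bounded_measurable Kc (gc i).
have bD i : bounded_measurable (D i) := continuous_bounded_measurable Kc (@Dc i).
have mean_gJ nu i : `|mean nu (g i) - a i - mean nu (D (J i))| <= eta / 2.
  have bga : bounded_measurable (fun x => g i x - a i).
    exact: bounded_measurableB (bounded_measurable_cst _ _).
  rewrite -(mean_cst nu (a i)) -!meanB //; last exact: bounded_measurable_cst.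
  exact: norm_mean_le (bounded_measurableB _ _) (gJ i).
exists ([seq J i | i <- enum 'I_n], k); split.
  move=> _ /mapP[i _ ->]; have := mean_gJ mu i.
  rewrite /a subrr sub0r normrN => /le_lt_trans; apply; rewrite /= -/eta; lra.
move=> nu nu_small; apply: epsU => i /=.
have small := nu_small _ (map_f J (mem_enum _ i)).
rewrite -/(mean nu (g i)) -/(a i).
have -> : mean nu (g i) - a i =
  (mean nu (g i) - a i - mean nu (D (J i))) + mean nu (D (J i)) by ring.
apply: le_lt_trans (ler_normD _ _) _.
have := mean_gJ nu i; rewrite -/eta in small; lra.
Qed.

Lemma measurable_preimage_weak_open d (T : measurableType d) (S : set T)
  (W : T -> PK R K) : measurable S ->
  (forall i, measurable_fun S (fun p => mean (W p) (D i))) ->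
  forall U, weak_open U -> measurable (S `&` W @^-1` U).
Proof.
move=> mS mW U HU.
pose B n := if unpickle n is Some t then
  (if `[< small_means t `<=` U >] then S `&` W @^-1` small_means t else set0)
  else set0.
suff -> : S `&` W @^-1` U = \bigcup_n B n.
  apply: bigcupT_measurable => n; rewrite /B; case: (unpickle n) => [t|]//.
  case: asboolP => _; last exact: measurable0.
  apply: (measurableI_forall_mem
    (P := fun i => [set p | `|mean (W p) (D i)| < t.2.+1%:R^-1])) => // i.
  set r := t.2.+1%:R^-1.
  rewrite (_ : [set p | _] = (fun p => mean (W p) (D i)) @^-1` `]-r, r[); first exact: mW.
  by apply/seteqP; split => p /=; rewrite in_itv /= ltr_norml.
apply/seteqP; split => [p [Sp /= Up]|p [n _]].
  have [t [t_mu tU]] := weak_open_small_means HU Up.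
  by exists (pickle t) => //; rewrite /B pickleK asboolT.
rewrite /B; case: (unpickle n) => [t|]//.
by case: asboolP => // tU [Sp /tU].
Qed.

End weak_open_preimage.

Lemma sq01_measurable (R : realType) : measurable (sq01 R).
Proof.
rewrite (_ : sq01 R = `[0, 1]%classic `*` `[0, 1]%classic).
  by apply: measurableX; exact: measurable_itv.
by apply/seteqP; split => -[x y] /=; rewrite !in_itv.
Qed.

Lemma symmetric_moment_realizer (R : realType) (K : ptopologicalType)
  (F : set (K -> R)) (w : (K -> R) -> R -> R -> R) :
  moment_function_sequence F w ->
  exists W : R -> R -> PK R K, (forall x y, W x y = W y x) /\
    forall f, F f -> forall x y, I01 R x -> I01 R y ->
      integ (W x y) f = (w f x y)%:E.
Proof.
move=> [wF wmom].
have I0 : I01 R 0 by rewrite /I01 /= lexx ler01.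
have [mu0 _] := wmom 0 0 I0 I0.
have realizer (p : R * R) : exists mu : PK R K, I01 R p.1 -> I01 R p.2 ->
    forall f, F f -> integ mu f = (w f p.1 p.2)%:E.
  have [[x01 y01]|] := pselect (I01 R p.1 /\ I01 R p.2).
    by have [mu Hmu] := wmom _ _ x01 y01; exists mu.
  by move=> not01; exists mu0 => x01 y01; exfalso; exact: not01.
have [m Hm] := choice realizer.
exists (fun x y => m (Num.min x y, Num.max x y)); split.
  by move=> x y; rewrite minC maxC.
move=> f Ff x y x01 y01; case: (leP x y) => xy; first exact: Hm.
by rewrite Hm //= (wF f Ff).2.1.
Qed.

Theorem lemma6 (R : realType) (K : ptopologicalType)
  (Kcpt : compact [set: K]) (Khaus : hausdorff_space K)
  (K2c : @second_countable K)
  (F : set (K -> R)) (HF : generating_system F)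
  (w : (K -> R) -> R -> R -> R) (Hw : moment_function_sequence F w) :
  exists W : R -> R -> PK R K,
    graphon W /\
    forall f, F f -> forall x y, I01 R x -> I01 R y ->
      integ (W x y) f = (w f x y)%:E.
Proof.
have [W [Wsym Wmom]] := symmetric_moment_realizer Hw.
exists W; split => //; split => [x y _ _|U HU]; first exact: Wsym.
have [D0 [D0c D0d]] := continuous_separable R Kcpt Khaus K2c.
have [D [DF Dd]] := dense_lin_span HF D0c D0d.
have Dc j : continuous (D j) := lin_span_continuous HF.1 (DF j).
apply: (measurable_preimage_weak_open Kcpt Dc Dd) => [|j|//].
  exact: sq01_measurable.
apply: (measurable_mean_lin_span HF.1 Kcpt (DF j)) => f Ff.
apply: eq_measurable_fun (Hw.1 f Ff).2.2.
by move=> [x y] /set_mem[x01 y01]; rewrite /mean Wmom.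
Qed.
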